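(* Consider the following kinetic transport model. Let $\{Z_k\}_{k\ge1}$ be a Markov chain on the two states $\{\mathrm{F},\mathrm{A}\}$ (''free'' and ''adsorbed'') with initial distribution $\lambda=(\lambda_{\mathrm F},\lambda_{\mathrm A})$ and transition matrix $$\begin{pmatrix} p_{\mathrm F\mathrm F} & p_{\mathrm F\mathrm A}\\ p_{\mathrm A\mathrm F} & p_{\mathrm A\mathrm A}\end{pmatrix}=\begin{pmatrix}1-a & a\\ b & 1-b\end{pmatrix},\qquad a,b\in[0,1].$$ Let $K_n=\sum_{k=1}^n \mathbf 1_{\{Z_k=\mathrm F\}}$ and $f_n(k)=P(K_n=k)$ for $0\le k\le n$. Independently of $\{Z_k\}$, let $(X_k,Y_k)_{k\ge1}$ be i.i.d. random vectors in $\mathbb Z^2$ with $$P((X_k,Y_k)=(j,0))=\alpha,\qquad P((X_k,Y_k)=(0,j))=\beta\qquad (j=\pm1),$$ where $\alpha,\beta\ge0$ and $\alpha+\beta=1/2$. Define $S(0)=(0,0)$ and, for $n\ge1$, $$S(n)=(S_X(n),S_Y(n))=\sum_{k=1}^{K_n}(X_k+1,\,Y_k).$$ Then for $n\ge1$, $0\le x\le 2n$ and $-n\le y\le n$ with $x\equiv y\pmod 2$, $$P(S(n)=(x,y))=\sum_{k=\lceil x/2\rceil}^n f_n(k)\sum_{j=0\vee(x-k)}^{\frac{x+y}{2}\wedge\frac{x-y}{2}}\frac{k!\;\alpha^{2j+k-x}\beta^{x-2j}}{j!\,(j+k-x)!\,((x+y)/2-j)!\,((x-y)/2-j)!},$$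 and $P(S(n)=(x,y))=0$ if $x\not\equiv y\pmod 2$.
   Context: $c\vee d=\max\{c,d\}$, $c\wedge d=\min\{c,d\}$; $\lceil c\rceil$ is the least integer $\ge c$. An empty sum (upper limit smaller than lower limit) is zero. *)

From HB Require Import structures.
From mathcomp Require Import all_boot all_order all_algebra.
Set Implicit Arguments. Unset Strict Implicit. Unset Printing Implicit Defensive.
Import Order.TTheory GRing.Theory Num.Theory.
Local Open Scope ring_scope.

Section Model.
Variable R : realFieldType.

(* states: true = F (free), false = A (adsorbed) *)
Definition trans (a b : R) (s t : bool) : R :=
  match s, t with
  | true, true => 1 - a
  | true, false => a
  | false, true => b
  | false, false => 1 - b
  end.

Definition init (lamF lamA : R) (s : bool) : R := if s then lamF else lamA.

Fixpoint path_w (a b : R) (s : bool) (z : seq bool) : R :=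
  match z with
  | [::] => 1
  | t :: u => trans a b s t * path_w a b t u
  end.

Definition chain_prob (a b lamF lamA : R) (z : seq bool) : R :=
  match z with
  | [::] => 1
  | s :: u => init lamF lamA s * path_w a b s u
  end.

(* steps (X,Y): 0 -> (1,0), 1 -> (-1,0), 2 -> (0,1), 3 -> (0,-1) *)
Definition stepX (s : 'I_4) : int :=
  match val s with 0%N => 1 | 1%N => -1 | _ => 0 end.
Definition stepY (s : 'I_4) : int :=
  match val s with 2%N => 1 | 3%N => -1 | _ => 0 end.
Definition step_w (alpha beta : R) (s : 'I_4) : R :=
  if (val s < 2)%N then alpha else beta.

Definition Kn (n : nat) (z : n.-tuple bool) : nat := count id z.

Definition SX (n : nat) (z : n.-tuple bool) (w : n.-tuple 'I_4) : int :=
  \sum_(i < n | (i < Kn z)%N) (stepX (tnth w i) + 1).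
Definition SY (n : nat) (z : n.-tuple bool) (w : n.-tuple 'I_4) : int :=
  \sum_(i < n | (i < Kn z)%N) stepY (tnth w i).

Definition weight (a b lamF lamA alpha beta : R) (n : nat)
    (z : n.-tuple bool) (w : n.-tuple 'I_4) : R :=
  chain_prob a b lamF lamA z * \prod_(i < n) step_w alpha beta (tnth w i).

Definition Pr (a b lamF lamA alpha beta : R) (n : nat)
    (E : n.-tuple bool -> n.-tuple 'I_4 -> bool) : R :=
  \sum_(z : n.-tuple bool) \sum_(w : n.-tuple 'I_4)
     (if E z w then weight a b lamF lamA alpha beta z w else 0).

Definition fn (a b lamF lamA alpha beta : R) (n k : nat) : R :=
  @Pr a b lamF lamA alpha beta n (fun z _ => Kn z == k).

Definition PS (a b lamF lamA alpha beta : R) (n : nat) (x y : int) : R :=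
  @Pr a b lamF lamA alpha beta n (fun z w => (SX z w == x) && (SY z w == y)).

(* exclusive upper bound (as nat) for a sum whose inclusive integer upper
   limit is hi : empty if hi < 0 *)
Definition upto (hi : int) : nat := if hi < 0 then 0%N else (absz hi).+1.

Definition rhs_formula (a b lamF lamA alpha beta : R) (n : nat) (x y : int) : R :=
  let xn := absz x in
  let u := ((x + y) %/ 2)%Z in
  let v := ((x - y) %/ 2)%Z in
  \sum_(xn.+1 %/ 2 <= k < n.+1)
    fn a b lamF lamA alpha beta n k *
    \sum_(xn - k <= j < upto (Num.min u v))
      ((k`!)%:R * alpha ^+ (2 * j + k - xn) * beta ^+ (xn - 2 * j)
       / ((j`!)%:R * ((j + k - xn)`!)%:R *
          ((absz (u - j%:Z))`!)%:R * ((absz (v - j%:Z))`!)%:R)).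

End Model.

(* Conditionally on the chain, S(n) is the sum of K_n i.i.d. steps equal to
   (2,0), (0,0), (1,1), (1,-1) with probabilities alpha, alpha, beta, beta;
   hence P(S(n) = (x,y)) = sum_k f_n(k) P(k steps end at (x,y)).  A walk of
   k steps ends at (u+v, u-v) iff it has j, j+k-u-v, u-j, v-j steps of the
   four kinds for some j, so the law of the k-step walk is a sum of weighted
   multinomial coefficients; this is checked by induction on k, the
   inductive step being Pascal's rule for multinomial coefficients.  Every
   step preserves the parity of x - y, which gives the vanishing part. *)
From HB Require Import structures.
From mathcomp Require Import all_boot all_order all_algebra.
From mathcomp Require Import ring zify.
Set Implicit Arguments. Unset Strict Implicit. Unset Printing Implicit Defensive.
Import Order.TTheory GRing.Theory Num.Theory.
Local Open Scope ring_scope.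

Section Multinomial.
Variable R : realFieldType.
Implicit Types (p q : R) (i l u d : int).

(* The probability that k = i + l + u + d independent steps of four kinds,
   with probabilities p, p, q, q, comprise exactly i, l, u, d steps of each
   kind. *)
Definition mweight p q i l u d : R :=
  if [&& 0 <= i, 0 <= l, 0 <= u & 0 <= d] then
    ((absz i + absz l + absz u + absz d)`!)%:R /
    (((absz i)`!)%:R * ((absz l)`!)%:R * ((absz u)`!)%:R * ((absz d)`!)%:R) *
    (p ^+ (absz i + absz l) * q ^+ (absz u + absz d))
  else 0.

Lemma mweight_eq0 p q i l u d :
  ~~ [&& 0 <= i, 0 <= l, 0 <= u & 0 <= d] -> mweight p q i l u d = 0.
Proof. by rewrite /mweight => /negbTE ->. Qed.

Lemma mweight_nat p q (I L U D : nat) : mweight p q I L U D =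
  ((I + L + U + D)`!)%:R / ((I`!)%:R * (L`!)%:R * (U`!)%:R * (D`!)%:R) *
  (p ^+ (I + L) * q ^+ (U + D)).
Proof. by []. Qed.

Lemma mweightC12 p q i l u d : mweight p q i l u d = mweight p q l i u d.
Proof.
rewrite /mweight; case: (0 <= i); case: (0 <= l) => //=.
by rewrite [(absz l + _)%N]addnC [((absz l)`!)%:R * _]mulrC.
Qed.

Lemma mweight_swap p q i l u d : mweight p q i l u d = mweight q p u d i l.
Proof.
rewrite /mweight; case: (0 <= i); case: (0 <= l); case: (0 <= u); case: (0 <= d) => //=.
have -> : (absz u + absz d + absz i + absz l = absz i + absz l + absz u + absz d)%N.
  by lia.
by congr (_ / _ * _); ring.
Qed.

Lemma mweight_predl p q (I L U D K : nat) : (I + L + U + D = K.+1)%N ->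
  p * mweight p q (I%:Z - 1) L U D = I%:R / K.+1%:R * mweight p q I L U D.
Proof.
case: I => [|I] hK; first by rewrite mweight_eq0 ?mulr0 ?mul0r.
have -> : I.+1%:Z - 1 = I by rewrite -addn1 PoszD addrK.
have {hK} -> : K = (I + L + U + D)%N by lia.
rewrite !mweight_nat !addSn !factS exprS !natrM.
have fact_neq0 m : (m`!)%:R != 0 :> R by rewrite pnatr_eq0 -lt0n fact_gt0.
field.
by rewrite !fact_neq0 -!natrD !nat1r !pnatr_eq0.
Qed.

(* Pascal's rule: the four predecessor terms are the fractions I/(k+1), L/(k+1),
   U/(k+1), D/(k+1) of the whole. *)
Lemma mweight_rec p q i l u d (k : nat) : i + l + u + d = k.+1%:Z ->
  mweight p q i l u d = p * mweight p q (i - 1) l u d + p * mweight p q i (l - 1) u d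
    + q * mweight p q i l (u - 1) d + q * mweight p q i l u (d - 1).
Proof.
move=> hk.
have [nonneg|neg] := boolP [&& 0 <= i, 0 <= l, 0 <= u & 0 <= d]; last first.
  by rewrite !mweight_eq0 ?mulr0 ?addr0 //; move: neg; lia.
case: i l u d nonneg hk => [I|//] [L|//] [U|//] [D|]; rewrite ?andbF // => _ hk.
have {hk} hK : (I + L + U + D = k.+1)%N by lia.
have eI : p * mweight p q (I%:Z - 1) L U D = I%:R / k.+1%:R * mweight p q I L U D.
  exact: mweight_predl.
have eL : p * mweight p q I (L%:Z - 1) U D = L%:R / k.+1%:R * mweight p q I L U D.
  rewrite mweightC12 (@mweight_predl _ _ _ _ _ _ k); last by lia.
  by rewrite mweightC12.
have eU : q * mweight p q I L (U%:Z - 1) D = U%:R / k.+1%:R * mweight p q I L U D.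
  rewrite mweight_swap (@mweight_predl _ _ _ _ _ _ k); last by lia.
  by rewrite -mweight_swap.
have eD : q * mweight p q I L U (D%:Z - 1) = D%:R / k.+1%:R * mweight p q I L U D.
  rewrite mweight_swap mweightC12 (@mweight_predl _ _ _ _ _ _ k); last by lia.
  by rewrite mweightC12 -mweight_swap.
rewrite eI eL eU eD -!mulrDl -!natrD hK.
by rewrite mulfV ?mul1r ?pnatr_eq0.
Qed.

End Multinomial.

Lemma sum_tuple_cons (V : nmodType) (T : finType) n (f : n.+1.-tuple T -> V) :
  \sum_w f w = \sum_(s : T) \sum_(t : n.-tuple T) f [tuple of s :: t].
Proof.
rewrite pair_big /= (reindex (fun p : T * n.-tuple T => [tuple of p.1 :: p.2])) //=.
apply: onW_bij; exists (fun w : n.+1.-tuple T => (thead w, [tuple of behead w])).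
  by case=> s t /=; rewrite theadE; congr (_, _); apply: val_inj.
by move=> w /=; rewrite [RHS]tuple_eta; apply: val_inj.
Qed.

Section Walk.
Variables (R : realFieldType) (alpha beta : R).

(* The law of the sum of k steps, at the point (x, y) = (u + v, u - v); the
   summation index j is the number of (2,0)-steps. *)
Definition walk_law (k : nat) (u v : int) : R :=
  \sum_(0 <= j < k.+1) mweight alpha beta j (j%:Z + k%:Z - (u + v)) (u - j%:Z) (v - j%:Z).

Lemma walk_law_widen N k u v : (k < N)%N ->
  \sum_(0 <= j < N) mweight alpha beta j (j%:Z + k%:Z - (u + v)) (u - j%:Z) (v - j%:Z)
  = walk_law k u v.
Proof.
move=> hkN; rewrite (big_cat_nat (leq0n k.+1) hkN) /= [X in _ + X]big1_seq ?addr0 //.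
by move=> j /andP[_]; rewrite mem_index_iota => /andP[hj _]; apply: mweight_eq0; lia.
Qed.

Lemma walk_law0 u v : walk_law 0 u v = if (u == 0) && (v == 0) then 1 else 0.
Proof.
rewrite /walk_law big_nat1 subr0 add0r.
have [/andP[/eqP -> /eqP ->]|nz] := boolP ((u == 0) && (v == 0)).
  by rewrite /mweight /= expr0 !mulr1 divr1.
by rewrite mweight_eq0 //; move: nz; lia.
Qed.

Lemma walk_law_rec k u v : walk_law k.+1 u v =
  alpha * walk_law k (u - 1) (v - 1) + alpha * walk_law k u v
  + beta * walk_law k (u - 1) v + beta * walk_law k u (v - 1).
Proof.
have first_shift : \sum_(0 <= j < k.+2)
    mweight alpha beta (j%:Z - 1) (j%:Z + k.+1%:Z - (u + v)) (u - j%:Z) (v - j%:Z)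
    = walk_law k (u - 1) (v - 1).
  rewrite big_nat_recl // mweight_eq0 // add0r.
  by apply: eq_bigr => j _; congr mweight; lia.
rewrite -first_shift -!(@walk_law_widen k.+2 k) // /walk_law.
rewrite !mulr_sumr -!big_split; apply: eq_bigr => j _ /=.
rewrite (@mweight_rec _ _ _ _ _ _ _ k); last by lia.
by congr (_ + _ + _ + _); congr (_ * _); congr mweight; lia.
Qed.

Lemma walk_law_small k u v : 2 * k%:Z < u + v -> walk_law k u v = 0.
Proof. by move=> hk; apply: big1 => j _; apply: mweight_eq0; lia. Qed.

End Walk.

Section Steps.
Variables (R : realFieldType) (alpha beta : R).
Hypothesis hab : alpha + beta = 1 / 2.

Definition steps_weight n (w : n.-tuple 'I_4) : R :=
  \prod_(i < n) step_w alpha beta (tnth w i).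

Definition prefix_sumX n k (w : n.-tuple 'I_4) : int :=
  \sum_(i < n | (i < k)%N) (stepX (tnth w i) + 1).
Definition prefix_sumY n k (w : n.-tuple 'I_4) : int :=
  \sum_(i < n | (i < k)%N) stepY (tnth w i).

Definition prefix_law n k (x y : int) : R :=
  \sum_(w : n.-tuple 'I_4)
    (if (prefix_sumX k w == x) && (prefix_sumY k w == y) then steps_weight w else 0).

Lemma steps_weight_cons n s (t : n.-tuple 'I_4) :
  steps_weight [tuple of s :: t] = step_w alpha beta s * steps_weight t.
Proof. by rewrite /steps_weight big_ord_recl tnth0; under eq_bigr do rewrite tnthS. Qed.

Lemma prefix_sum_cons (f : 'I_4 -> int) n k s (t : n.-tuple 'I_4) :
  \sum_(i < n.+1 | (i < k.+1)%N) f (tnth [tuple of s :: t] i)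
  = f s + \sum_(i < n | (i < k)%N) f (tnth t i).
Proof.
rewrite big_mkcond big_ord_recl /= tnth0; congr (_ + _).
by rewrite [RHS]big_mkcond; apply: eq_bigr => i _; rewrite tnthS.
Qed.

Lemma steps_weight_total n : \sum_(w : n.-tuple 'I_4) steps_weight w = 1.
Proof.
elim: n => [|n IH].
  by rewrite (eq_bigr (fun _ => 1)) ?sumr_const ?card_tuple // => w _; rewrite /steps_weight big_ord0.
rewrite sum_tuple_cons; under eq_bigr do under eq_bigr do rewrite steps_weight_cons.
under eq_bigr do rewrite -mulr_sumr IH mulr1.
rewrite !big_ord_recl big_ord0 /step_w /=.
have -> : alpha + (alpha + (beta + (beta + 0))) = 2 * (alpha + beta) by ring.
by rewrite hab mulrC divfK // pnatr_eq0.
Qed.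

Lemma prefix_law0 n x y : prefix_law n 0 x y = if (x == 0) && (y == 0) then 1 else 0.
Proof.
rewrite /prefix_law /prefix_sumX /prefix_sumY.
under eq_bigr do rewrite !big_pred0 // [0 == x]eq_sym [0 == y]eq_sym.
by case: ifP => _; [exact: steps_weight_total | rewrite big1].
Qed.

Lemma prefix_law_rec n k x y : prefix_law n.+1 k.+1 x y =
  \sum_(s : 'I_4) step_w alpha beta s * prefix_law n k (x - (stepX s + 1)) (y - stepY s).
Proof.
rewrite /prefix_law sum_tuple_cons; apply: eq_bigr => s _.
rewrite mulr_sumr; apply: eq_bigr => t _.
rewrite /prefix_sumX /prefix_sumY (prefix_sum_cons (fun s => stepX s + 1)) prefix_sum_cons.
rewrite -/(prefix_sumX k t) -/(prefix_sumY k t) steps_weight_cons.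
have -> : (stepX s + 1 + prefix_sumX k t == x) = (prefix_sumX k t == x - (stepX s + 1)).
  by apply/eqP/eqP; lia.
have -> : (stepY s + prefix_sumY k t == y) = (prefix_sumY k t == y - stepY s).
  by apply/eqP/eqP; lia.
by case: ifP; rewrite ?mulr0.
Qed.

Lemma prefix_law_walk_law n k u v : (k <= n)%N ->
  prefix_law n k (u + v) (u - v) = walk_law alpha beta k u v.
Proof.
elim: k n u v => [|k IH] n u v hk.
  rewrite prefix_law0 walk_law0; congr (if _ then _ else _).
  by apply/andP/andP => -[/eqP h1 /eqP h2]; split; apply/eqP; lia.
case: n hk => // n hk.
rewrite prefix_law_rec walk_law_rec !big_ord_recl big_ord0 addr0 /step_w /stepX /stepY /=.
rewrite -!(IH n) // !addr0 ![in LHS]addrA.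
by congr (_ + _ + _ + _); congr (_ * prefix_law _ _ _ _); lia.
Qed.

Lemma prefix_law_odd n k x y : (k <= n)%N -> ~~ (2 %| x - y)%Z ->
  prefix_law n k x y = 0.
Proof.
elim: k n x y => [|k IH] n x y hk odd_xy.
  rewrite prefix_law0; case: ifP => // /andP[/eqP hx /eqP hy].
  by move: odd_xy; rewrite hx hy subr0 dvdz0.
case: n hk => // n hk.
rewrite prefix_law_rec !big_ord_recl big_ord0 /stepX /stepY /= !IH ?mulr0 ?addr0 //.
all: apply: contra odd_xy => /dvdzP[m hm]; apply/dvdzP.
all: by [exists (m + 1); lia | exists m; lia].
Qed.

End Steps.

Section Chain.
Variables (R : realFieldType) (a b lamF lamA alpha beta : R) (n : nat).
Hypothesis hab : alpha + beta = 1 / 2.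

Lemma Kn_le (z : n.-tuple bool) : (Kn z <= n)%N.
Proof. by rewrite /Kn -{2}(size_tuple z) count_size. Qed.

Lemma PS_prefix_law x y : PS a b lamF lamA alpha beta n x y =
  \sum_(z : n.-tuple bool) chain_prob a b lamF lamA z * prefix_law alpha beta n (Kn z) x y.
Proof.
rewrite /PS /Pr; apply: eq_bigr => z _; rewrite /prefix_law mulr_sumr.
by apply: eq_bigr => w _; rewrite /weight; case: ifP; rewrite ?mulr0.
Qed.

Lemma fn_chain_prob k : fn a b lamF lamA alpha beta n k =
  \sum_(z : n.-tuple bool) (if Kn z == k then chain_prob a b lamF lamA z else 0).
Proof.
rewrite /fn /Pr; apply: eq_bigr => z _; case: ifP => _; last by rewrite big1.
by rewrite -[RHS]mulr1 -(steps_weight_total hab n) mulr_sumr.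
Qed.

Lemma sum_chain_prob_Kn (H : nat -> R) :
  \sum_(z : n.-tuple bool) chain_prob a b lamF lamA z * H (Kn z) =
  \sum_(0 <= k < n.+1) fn a b lamF lamA alpha beta n k * H k.
Proof.
under [RHS]eq_bigr do rewrite fn_chain_prob mulr_suml.
rewrite exchange_big /=; apply: eq_bigr => z _.
under eq_bigr do rewrite (fun_if (fun t => t * H _)) mul0r.
have hK : (Kn z < n.+1)%N by rewrite ltnS Kn_le.
by rewrite -big_mkcond big_mkord (big_pred1 (Ordinal hK)) // => j; rewrite /= eq_sym.
Qed.

End Chain.

Section Formula.
Variables (R : realFieldType) (alpha beta : R).

Lemma ltn_upto (j : nat) (m : int) : (j < upto m)%N = (j%:Z <= m).
Proof. by rewrite /upto; case: ifP; lia. Qed.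

Lemma rhs_term_mweight k (X : nat) u v (j : nat) : X%:Z = u + v ->
  (if (X - k <= j)%N && (j < upto (Num.min u v))%N then
     (k`!)%:R * alpha ^+ (2 * j + k - X) * beta ^+ (X - 2 * j)
     / ((j`!)%:R * ((j + k - X)`!)%:R *
        ((absz (u - j%:Z))`!)%:R * ((absz (v - j%:Z))`!)%:R)
   else 0) = mweight alpha beta j (j%:Z + k%:Z - (u + v)) (u - j%:Z) (v - j%:Z).
Proof.
move=> hX; rewrite ltn_upto le_min -hX.
case: ifP => range_j; last by apply/esym/mweight_eq0; move: range_j; lia.
rewrite /mweight ifT; last by move: range_j; lia.
have -> : absz (j%:Z + k%:Z - X%:Z)%R = (j + k - X)%N by move: range_j; lia.
have -> : (j + (j + k - X) + absz (u - j%:Z)%R + absz (v - j%:Z)%R = k)%N.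
  by move: range_j; lia.
have -> : (j + (j + k - X) = 2 * j + k - X)%N by move: range_j; lia.
have -> : (absz (u - j%:Z)%R + absz (v - j%:Z)%R = X - 2 * j)%N.
  by move: range_j; lia.
by rewrite /=; ring.
Qed.

Lemma rhs_inner_walk_law k (X : nat) u v : X%:Z = u + v ->
  \sum_(X - k <= j < upto (Num.min u v))
     ((k`!)%:R * alpha ^+ (2 * j + k - X) * beta ^+ (X - 2 * j)
      / ((j`!)%:R * ((j + k - X)`!)%:R *
         ((absz (u - j%:Z))`!)%:R * ((absz (v - j%:Z))`!)%:R))
  = walk_law alpha beta k u v.
Proof.
move=> hX; set N := maxn k.+1 (upto (Num.min u v)).
rewrite (big_nat_widen _ _ N) ?leq_maxr // (big_nat_widenl _ 0) // big_mkcond /=.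
rewrite -(@walk_law_widen _ _ _ N) ?leq_maxl //; apply: eq_bigr => j _.
by rewrite -(rhs_term_mweight _ _ hX) andbC.
Qed.

End Formula.

Theorem proposition1 (R : realFieldType) (a b lamF lamA alpha beta : R)
  (ha : 0 <= a <= 1) (hb : 0 <= b <= 1)
  (hlF : 0 <= lamF) (hlA : 0 <= lamA) (hl : lamF + lamA = 1)
  (hal : 0 <= alpha) (hbe : 0 <= beta) (hab : alpha + beta = 1 / 2)
  (n : nat) (hn : (1 <= n)%N) :
  (forall x y : int, 0 <= x <= 2 * n%:Z -> - n%:Z <= y <= n%:Z ->
     (2 %| x - y)%Z ->
     PS a b lamF lamA alpha beta n x y = rhs_formula a b lamF lamA alpha beta n x y) /\
  (forall x y : int, ~~ (2 %| x - y)%Z ->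
     PS a b lamF lamA alpha beta n x y = 0).
Proof.
split=> [x y /andP[x_ge0 x_le] _ /dvdzP[q hq] | x y odd_xy]; last first.
  by rewrite PS_prefix_law big1 // => z _; rewrite prefix_law_odd ?Kn_le ?mulr0.
have [X eX] : exists X : nat, x = X by exists (absz x); lia.
subst x.
rewrite /rhs_formula /=.
have -> : ((X%:Z + y) %/ 2)%Z = q + y.
  by rewrite (_ : X%:Z + y = (q + y) * 2) ?mulzK //; lia.
rewrite hq mulzK //.
have hX : X%:Z = q + y + q by lia.
under [RHS]eq_bigr do rewrite (rhs_inner_walk_law _ _ _ hX).
have law k : (k <= n)%N -> prefix_law alpha beta n k X y = walk_law alpha beta k (q + y) q.
  by move=> hk; rewrite -(prefix_law_walk_law hab _ _ hk); congr prefix_law; lia.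
rewrite PS_prefix_law (sum_chain_prob_Kn _ _ _ _ _ hab (fun k => prefix_law alpha beta n k X y)).
rewrite (@big_cat_nat _ _ _ (X.+1 %/ 2)) //=; last by lia.
rewrite [S in S + _]big1_seq ?add0r => [|k]; last first.
  by rewrite mem_index_iota => /andP[_ hk]; rewrite law ?walk_law_small ?mulr0 //; lia.
rewrite big_nat_cond [RHS]big_nat_cond; apply: eq_bigr => k /andP[/andP[_ hk] _].
by rewrite law.
Qed.
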